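(* Let $\Omega\subset\mathbb{R}^n$ be a bounded Lipschitz domain, $T>0$, $\Omega_T=(0,T]\times\Omega$, $W$ a Hilbert space of measurable functions on $\Omega_T$ continuously embedded in $L^2(0,T;L^2(\Omega))$, $y_0\in L^2(\Omega)$, and $S:L^2(0,T;\mathbb{R}^2)\to W$ a continuous affine map with $\|S(u)\|_W\le C(\|u\|_{L^2(0,T;\mathbb{R}^2)}+\|y_0\|_{L^2(\Omega)})$ for a constant $C$ independent of $u,y_0$; let $S_0$ be its linear part (the map $S$ with $y_0=0$) and $\|S_0\|$ its operator norm from $L^2(0,T;\mathbb{R}^2)$ to $L^2(0,T;L^2(\omega_{\mathrm{obs}}))$, where $\omega_{\mathrm{obs}}\subset\Omega$. Let $y^d\in L^2(0,T;L^2(\omega_{\mathrm{obs}}))$, $\alpha>0$, $\varepsilon>0$, $\mathcal{U}=H^1(0,T;\mathbb{R}^2)$, and $\beta>\|S_0\|^2+\alpha+\pi^2$. Let $\bar u\in\mathcal{U}$ be a local minimizer over $\mathcal{U}$ of $$J_\beta(u)=\frac12\|Su-y^d\|^2_{L^2(0,T;L^2(\omega_{\mathrm{obs}}))}+\frac\alpha2\|u\|^2_{L^2(0,T;\mathbb{R}^2)}+\frac\varepsilon2\|u_t\|^2_{L^2(0,T;\mathbb{R}^2)}+\beta\int_0^T|u_1(t)u_2(t)|\,dt.$$ Then $\bar u_1(t)\bar u_2(t)=0$ for all $t\in[0,T]$ apart from intervals of length at most $\sqrt\varepsilon$; i.e. every interval contained in $\{t\in[0,T]:\bar u_1(t)\bar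 u_2(t)\neq0\}$ has length at most $\sqrt{\varepsilon}$.
   Context: $Su=S(u)$ is the state for control $u=(u_1,u_2)$, restricted to $(0,T)\times\omega_{\mathrm{obs}}$ in the tracking term. Elements of $H^1(0,T;\mathbb{R}^2)$ are identified with their continuous representatives. *)

From HB Require Import structures.
From mathcomp Require Import all_boot all_order all_algebra.
From mathcomp Require Import all_classical all_reals all_analysis.
Set Implicit Arguments. Unset Strict Implicit. Unset Printing Implicit Defensive.
Import Order.TTheory GRing.Theory Num.Theory.
Import numFieldNormedType.Exports.
Local Open Scope classical_set_scope.
Local Open Scope ring_scope.

(* A control u = (u_1, u_2) : two real functions of time (only their values
   on [0,T] matter). *)
Definition ctrl (R : realType) := ((R -> R) * (R -> R))%type.

Section Defs.
Context (R : realType).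
Notation leb := (@lebesgue_measure R).

Definition Icc (a b : R) : set R := `[a, b].

Definition L2_0T (T : R) (f : R -> R) : Prop :=
  measurable_fun (Icc 0 T) f /\
  (\int[leb]_(x in Icc 0 T) ((f x) ^+ 2)%:E < +oo)%E.

Definition sqnorm_0T (T : R) (f : R -> R) : R :=
  fine (\int[leb]_(x in Icc 0 T) ((f x) ^+ 2)%:E).

Definition L2ctrl (T : R) (u : ctrl R) : Prop := L2_0T T u.1 /\ L2_0T T u.2.

Definition sqnorm_ctrl (T : R) (u : ctrl R) : R :=
  sqnorm_0T T u.1 + sqnorm_0T T u.2.

Definition ctrl_sub (u v : ctrl R) : ctrl R :=
  (fun t => u.1 t - v.1 t, fun t => u.2 t - v.2 t).

Definition ctrl_lin (a : R) (u v : ctrl R) : ctrl R :=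
  (fun t => a * u.1 t + v.1 t, fun t => a * u.2 t + v.2 t).

(* u in H^1(0,T;R^2) (continuous representative on [0,T]) with weak
   derivative g = u_t in L^2(0,T;R^2):  u(t) = u(0) + int_0^t g  on [0,T]. *)
Definition H1ctrl (T : R) (u g : ctrl R) : Prop :=
  L2ctrl T g /\
  (forall t, 0 <= t <= T ->
     u.1 t = u.1 0 + fine (\int[leb]_(x in Icc 0 t) (g.1 x)%:E)) /\
  (forall t, 0 <= t <= T ->
     u.2 t = u.2 0 + fine (\int[leb]_(x in Icc 0 t) (g.2 x)%:E)).

Definition sqdist_H1 (T : R) (u g v h : ctrl R) : R :=
  sqnorm_ctrl T (ctrl_sub u v) + sqnorm_ctrl T (ctrl_sub g h).

Definition L2mu d (X : measurableType d) (mu : {measure set X -> \bar R})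
  (f : X -> R) : Prop :=
  measurable_fun setT f /\ (\int[mu]_x ((f x) ^+ 2)%:E < +oo)%E.

Definition sqnorm_mu d (X : measurableType d) (mu : {measure set X -> \bar R})
  (f : X -> R) : R :=
  fine (\int[mu]_x ((f x) ^+ 2)%:E).

Definition opnorm d (X : measurableType d) (mu : {measure set X -> \bar R})
  (T : R) (S0 : ctrl R -> X -> R) : R :=
  sup [set y | exists u, L2ctrl T u /\ sqnorm_ctrl T u <= 1 /\
                         y = Num.sqrt (sqnorm_mu mu (S0 u))].

(* The cost J_beta(u), with u_t = g; the state is S u = s0 + S0 u. *)
Definition Jbeta d (X : measurableType d) (mu : {measure set X -> \bar R})
  (T : R) (s0 : X -> R) (S0 : ctrl R -> X -> R) (yd : X -> R)
  (alpha eps beta : R) (u g : ctrl R) : R :=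
  2^-1 * sqnorm_mu mu (fun x => s0 x + S0 u x - yd x)
  + alpha / 2 * sqnorm_ctrl T u
  + eps / 2 * sqnorm_ctrl T g
  + beta * fine (\int[leb]_(t in Icc 0 T) (`|u.1 t * u.2 t|)%:E).

End Defs.

From HB Require Import structures.
From mathcomp Require Import all_boot all_order all_algebra.
From mathcomp Require Import all_classical all_reals all_analysis.
From mathcomp Require Import measurable_realfun ring lra.
Set Implicit Arguments. Unset Strict Implicit. Unset Printing Implicit Defensive.
Import Order.TTheory GRing.Theory Num.Theory.
Import numFieldNormedType.Exports.
Local Open Scope classical_set_scope.
Local Open Scope ring_scope.

(** Suppose [(a, b)] has length [> L := sqrt eps] and lies in the set where
    [ubar1 ubar2 <> 0].  On a subinterval [[p, p + L]] both components are
    bounded away from [0] and [sg * ubar1 * ubar2 > 0] for a fixed sign [sg].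
    Perturb [ubar] by [s (phi, - sg phi)], where [phi] is the sine bump of
    [[p, p + L]].  For small [s] the signs of the factors are frozen, so the
    coupling term is exactly quadratic in [s] with leading coefficient
    [- beta ||phi||^2], and [J_beta] along the perturbation is
    [J0 + B s + Q s^2] with
    [Q <= L/2 (||S0||^2 + alpha + eps (pi/L)^2 - beta)
       = L/2 (||S0||^2 + alpha + pi^2 - beta) < 0],
    using [||phi||^2 = L/2], [||phi'||^2 = (pi/L)^2 L/2] and [eps = L^2].
    This contradicts local minimality. *)

Section square_integrable.
Context {R : realType} {d : measure_display} {X : measurableType d}
  (mu : {measure set X -> \bar R}) (D : set X).
Hypothesis mD : measurable D.

Definition sq_integrable (f : X -> R) :=
  measurable_fun D f /\ (\int[mu]_(x in D) ((f x) ^+ 2)%:E < +oo)%E.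

Definition sqnorm (f : X -> R) := \int[mu]_(x in D) (f x ^+ 2).

Lemma integrableD_EFin (f g : X -> R) :
  mu.-integrable D (EFin \o f) -> mu.-integrable D (EFin \o g) ->
  mu.-integrable D (EFin \o (fun x => f x + g x)).
Proof. by move=> /(integrableD mD) /[apply]; apply: eq_integrable. Qed.

Lemma integrableZl_EFin (k : R) (f : X -> R) : mu.-integrable D (EFin \o f) ->
  mu.-integrable D (EFin \o (fun x => k * f x)).
Proof. by move=> /(integrableZl mD k); apply: eq_integrable. Qed.

Lemma integrable_sqr (f : X -> R) : sq_integrable f ->
  mu.-integrable D (EFin \o (fun x => f x ^+ 2)).
Proof.
case=> mf fi; apply/integrableP; split.
  by apply/measurable_EFinP; apply: measurable_funX.
by under eq_integral do rewrite /= ger0_norm ?sqr_ge0//.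
Qed.

Lemma sq_integrableP (f : X -> R) : measurable_fun D f ->
  mu.-integrable D (EFin \o (fun x => f x ^+ 2)) -> sq_integrable f.
Proof.
move=> mf /integrableP[_ fi]; split => //.
by move: fi; under eq_integral do rewrite /= ger0_norm ?sqr_ge0//.
Qed.

Lemma normrM_le_sqrD (a b : R) : `|a * b| <= a ^+ 2 + b ^+ 2.
Proof. by have [ab0|ab0] := lerP 0 (a * b); [rewrite ger0_norm|rewrite ltr0_norm]; nra. Qed.

Lemma integrable_mul (f g : X -> R) : sq_integrable f -> sq_integrable g ->
  mu.-integrable D (EFin \o (fun x => f x * g x)).
Proof.
move=> Lf Lg.
have := integrableD_EFin (integrable_sqr Lf) (integrable_sqr Lg).
apply: le_integrable => //.
  by apply/measurable_EFinP; apply: measurable_funM; [case: Lf | case: Lg].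
move=> x _; rewrite /= lee_fin [leRHS]ger0_norm ?addr_ge0 ?sqr_ge0//.
exact: normrM_le_sqrD.
Qed.

Lemma integrable_normM (f g : X -> R) : sq_integrable f -> sq_integrable g ->
  mu.-integrable D (EFin \o (fun x => `|f x * g x|)).
Proof.
by move=> Lf Lg; have := integrable_abse (integrable_mul Lf Lg); apply: eq_integrable.
Qed.

Lemma sq_integrable_lin (s : R) (f g : X -> R) : sq_integrable f -> sq_integrable g ->
  sq_integrable (fun x => s * g x + f x).
Proof.
move=> Lf Lg; have [mf _] := Lf; have [mg _] := Lg.
apply: sq_integrableP.
  by apply: measurable_funD => //; apply: measurable_funM.
have := integrableD_EFin (integrableZl_EFin (2 * s ^+ 2) (integrable_sqr Lg))
                         (integrableZl_EFin 2 (integrable_sqr Lf)).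
apply: le_integrable => //.
  by apply/measurable_EFinP; apply: measurable_funX; apply: measurable_funD => //;
     apply: measurable_funM.
move=> x _; rewrite /= lee_fin ger0_norm ?sqr_ge0//; apply: le_trans (ler_norm _).
have := sqr_ge0 (s * g x - f x); nra.
Qed.

Lemma sq_integrableZ (c : R) (f : X -> R) : sq_integrable f ->
  sq_integrable (fun x => c * f x).
Proof.
move=> [mf fi]; apply: sq_integrableP; first exact: measurable_funM.
have := integrableZl_EFin (c ^+ 2) (integrable_sqr (conj mf fi)).
by apply: eq_integrable => // x _; rewrite /= exprMn.
Qed.

Lemma sqnorm_ge0 (f : X -> R) : 0 <= sqnorm f.
Proof. by apply: Rintegral_ge0 => x _; exact: sqr_ge0. Qed.

Lemma sqnorm_ae (f g : X -> R) : measurable_fun D f -> measurable_fun D g ->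
  {ae mu, forall x, f x = g x} -> sqnorm f = sqnorm g.
Proof.
move=> mf mg fg; congr fine; apply: ae_eq_integral => //.
- by apply/measurable_EFinP; exact: measurable_funX.
- by apply/measurable_EFinP; exact: measurable_funX.
- by apply: filterS fg => x /= -> _.
Qed.

Lemma sqnormZ (c : R) (f : X -> R) : sq_integrable f ->
  sqnorm (fun x => c * f x) = c ^+ 2 * sqnorm f.
Proof.
move=> Lf; rewrite /sqnorm -RintegralZl //; last exact: integrable_sqr.
by apply: eq_Rintegral => x _; rewrite exprMn.
Qed.

Lemma sqnorm_lin (s : R) (f g : X -> R) : sq_integrable f -> sq_integrable g ->
  sqnorm (fun x => s * g x + f x) =
  sqnorm f + 2 * s * \int[mu]_(x in D) (f x * g x) + s ^+ 2 * sqnorm g.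
Proof.
move=> Lf Lg.
have If := integrable_sqr Lf; have Ifg := integrable_mul Lf Lg.
have Ig := integrable_sqr Lg.
rewrite /sqnorm (eq_Rintegral _ (g := fun x =>
  (f x ^+ 2 + (2 * s) * (f x * g x)) + s ^+ 2 * g x ^+ 2)); last by move=> x _; ring.
rewrite RintegralD //; last 2 first.
- exact: integrableD_EFin (integrableZl_EFin _ Ifg).
- exact: integrableZl_EFin.
by rewrite RintegralD ?RintegralZl ?mulrA//; exact: integrableZl_EFin.
Qed.

End square_integrable.

Section sine_bump.
Context {R : realType}.
Notation leb := (@lebesgue_measure R).

Lemma derivable1_continuous (f : R -> R) : (forall x, derivable f x 1) -> continuous f.
Proof. by move=> f' x; apply/differentiable_continuous/derivable1_diffP. Qed.

Lemma integrable_continuous (f : R -> R) (a b : R) : continuous f ->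
  leb.-integrable `[a, b] (EFin \o f).
Proof.
move=> cf; apply: continuous_compact_integrable; first exact: segment_compact.
by apply: continuous_subspaceT => x; exact: cf.
Qed.

Lemma Rintegral_is_derive (f F : R -> R) (a b : R) : a < b -> continuous f ->
  (forall x, is_derive x (1 : R) F (f x)) -> \int[leb]_(x in `[a, b]) f x = F b - F a.
Proof.
move=> ab cf F'.
have cF : continuous F by apply: derivable1_continuous => x; exact: ex_derive.
rewrite /Rintegral (@continuous_FTC2 _ f F a b ab) -?EFinB //.
- by apply: continuous_subspaceT => x; exact: cf.
- split; first by move=> x _; exact: ex_derive.
  + exact: cvg_at_right_filter (cF a).
  + exact: cvg_at_left_filter (cF b).
- by move=> x _; rewrite derive1E; exact: derive_val.
Qed.

Lemma Rintegral_itv_oo_cc (f : R -> R) (a b : R) : continuous f ->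
  \int[leb]_(x in `]a, b[) f x = \int[leb]_(x in `[a, b]) f x.
Proof.
move=> /(integrable_continuous a b) If.
rewrite Rintegral_itv_bndo_bndc; last first.
  by apply: integrableS If => //; apply: subset_itv; rewrite bnd_simp.
by rewrite Rintegral_itv_obnd_cbnd //; apply: integrableS If => //; apply: subset_itv;
  rewrite bnd_simp.
Qed.

Lemma measurable_fun_restrict_continuous (f : R -> R) (D E : set R) :
  measurable D -> measurable E -> continuous f -> measurable_fun E (f \_ D).
Proof.
move=> mD mE cf; apply: (measurable_restrict f mD mE).1.
exact: measurable_funS (continuous_measurable_fun cf).
Qed.

Lemma sq_integrable_bounded (a b M : R) (f : R -> R) : measurable_fun `[a, b] f ->
  (forall x, f x ^+ 2 <= M) -> sq_integrable leb `[a, b] f.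
Proof.
move=> mf fM; apply: sq_integrableP => //.
have := integrable_continuous a b (@cst_continuous _ _ M).
apply: le_integrable => //; first by apply/measurable_EFinP; exact: measurable_funX.
move=> x _; rewrite /= lee_fin ger0_norm ?sqr_ge0 //.
exact: le_trans (fM x) (ler_norm _).
Qed.

Variables (p L : R).
Hypothesis L0 : 0 < L.
Let k := pi / L.

Let k_neq0 : k != 0.
Proof. by rewrite mulf_neq0 // ?invr_eq0 gt_eqF // pi_gt0. Qed.

Let kL : k * (p + L - p) = pi.
Proof. by rewrite addrAC subrr add0r mulfVK // gt_eqF. Qed.

Let sin_shift t := sin (k * (t - p)).
Let cos_shift t := cos (k * (t - p)).

Let sin_shift_p : sin_shift p = 0.
Proof. by rewrite /sin_shift subrr mulr0 sin0. Qed.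

Let sin_shift_pL : sin_shift (p + L) = 0.
Proof. by rewrite /sin_shift kL sinpi. Qed.

Lemma is_derive_sin_shift x : is_derive x (1 : R) sin_shift (k * cos_shift x).
Proof. by apply: is_derive_eq; rewrite subr0 scaler1 mulrC. Qed.

Lemma Rintegral_sin_shift_sqr : \int[leb]_(x in `[p, p + L]) sin_shift x ^+ 2 = L / 2.
Proof.
pose F t := t / 2 - (2 * k)^-1 * (sin_shift t * cos_shift t).
have F' x : is_derive x (1 : R) F (sin_shift x ^+ 2).
  apply: is_derive_eq; rewrite /sin_shift /cos_shift subr0 !scaler0 add0r.
  rewrite -[_%:A]/(2^-1 * 1) -![_ *: _]/(_ * _).
  by rewrite -[X in 2^-1 * X](cos2Dsin2 (k * (x - p))); field.
rewrite (Rintegral_is_derive _ _ F') ?ltrDl//; last first.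
  by apply: derivable1_continuous => x; exact: ex_derive.
by rewrite /F sin_shift_p sin_shift_pL !mul0r mulr0 !subr0; field.
Qed.

Lemma Rintegral_cos_shift_sqr : \int[leb]_(x in `[p, p + L]) cos_shift x ^+ 2 = L / 2.
Proof.
pose F t := t / 2 + (2 * k)^-1 * (sin_shift t * cos_shift t).
have F' x : is_derive x (1 : R) F (cos_shift x ^+ 2).
  apply: is_derive_eq; rewrite /sin_shift /cos_shift subr0 !scaler0 add0r.
  rewrite -[_%:A]/(2^-1 * 1) -![_ *: _]/(_ * _).
  by rewrite -[X in 2^-1 * X](cos2Dsin2 (k * (x - p))); field.
rewrite (Rintegral_is_derive _ _ F') ?ltrDl//; last first.
  by apply: derivable1_continuous => x; exact: ex_derive.
by rewrite /F sin_shift_p sin_shift_pL !mul0r mulr0 !addr0; field.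
Qed.

(* The ratio [||sin_bump_deriv||^2 / ||sin_bump||^2 = (pi / L)^2] is the Wirtinger
   constant of [[p, p + L]]; with [eps = L^2] it produces the [pi^2] in the bound
   on [beta]. *)
Definition sin_bump := sin_shift \_ `[p, p + L].
Definition sin_bump_deriv := (fun t => k * cos_shift t) \_ `]p, p + L[.

Lemma sin_bump_sqr_le1 x : sin_bump x ^+ 2 <= 1.
Proof.
rewrite /sin_bump patchE; case: ifP => _; last by rewrite expr0n.
by rewrite -(cos2Dsin2 (k * (x - p))) lerDr sqr_ge0.
Qed.

Lemma sin_bump_deriv_sqr_le x : sin_bump_deriv x ^+ 2 <= k ^+ 2.
Proof.
rewrite /sin_bump_deriv patchE; case: ifP => _; last by rewrite expr0n sqr_ge0.
rewrite exprMn ler_piMr ?sqr_ge0 // -(cos2Dsin2 (k * (x - p))) lerDl sqr_ge0 //.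
Qed.

Lemma sq_integrable_sin_bump T : sq_integrable leb `[0, T] sin_bump.
Proof.
apply: sq_integrable_bounded sin_bump_sqr_le1.
by apply: measurable_fun_restrict_continuous => //; apply: derivable1_continuous => x;
   exact: ex_derive.
Qed.

Lemma sq_integrable_sin_bump_deriv T : sq_integrable leb `[0, T] sin_bump_deriv.
Proof.
apply: sq_integrable_bounded sin_bump_deriv_sqr_le.
by apply: measurable_fun_restrict_continuous => //; apply: derivable1_continuous => x;
   exact: ex_derive.
Qed.

Lemma sqnorm_sin_bump T : `[p, p + L] `<=` `[0, T] -> sqnorm leb `[0, T] sin_bump = L / 2.
Proof.
move=> pLT; rewrite /sqnorm -Rintegral_sin_shift_sqr -(setIidr pLT) Rintegral_mkcondr.
by apply: eq_Rintegral => x _; rewrite /sin_bump !patchE; case: ifP; rewrite ?expr0n.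
Qed.

Lemma sqnorm_sin_bump_deriv T :
  `[p, p + L] `<=` `[0, T] -> sqnorm leb `[0, T] sin_bump_deriv = k ^+ 2 * (L / 2).
Proof.
move=> pLT; have ccos2 : continuous (fun x => cos_shift x ^+ 2).
  by apply: derivable1_continuous => x; exact: ex_derive.
rewrite -Rintegral_cos_shift_sqr -Rintegral_itv_oo_cc // -RintegralZl //; last first.
  apply: integrableS (integrable_continuous p (p + L) ccos2) => //.
  by apply: subset_itv; rewrite bnd_simp.
have pLT' : `]p, p + L[ `<=` `[0, T].
  by apply: subset_trans pLT; apply: subset_itv; rewrite bnd_simp.
rewrite /sqnorm -(setIidr pLT') Rintegral_mkcondr.
apply: eq_Rintegral => x _; rewrite /sin_bump_deriv !patchE.
by case: ifP; rewrite ?expr0n ?exprMn.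
Qed.

Let sin_bump0 : 0 <= p -> sin_bump 0 = 0.
Proof.
move=> p0; rewrite /sin_bump patchE; case: ifP => // /set_mem.
rewrite /= in_itv /= => /andP[p_le0 _].
have p_eq0 : p = 0 by apply/eqP; rewrite eq_le p_le0 p0.
by rewrite -{1}p_eq0 sin_shift_p.
Qed.

Let continuous_k_cos_shift : continuous (fun x => k * cos_shift x).
Proof. by apply: derivable1_continuous => x; exact: ex_derive. Qed.

Let Rintegral_k_cos_shift b : p < b ->
  \int[leb]_(x in `]p, b]) (k * cos_shift x) = sin_shift b.
Proof.
move=> pb; rewrite Rintegral_itv_obnd_cbnd; last first.
  by apply: integrableS (integrable_continuous p b continuous_k_cos_shift) => //;
     apply: subset_itv; rewrite bnd_simp.
by rewrite (Rintegral_is_derive _ _ is_derive_sin_shift) // sin_shift_p subr0.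
Qed.

Lemma sin_bump_FTC t : 0 <= p -> 0 <= t ->
  sin_bump t = sin_bump 0 + \int[leb]_(x in `[0, t]) sin_bump_deriv x.
Proof.
move=> p0 t0; rewrite sin_bump0 // add0r /sin_bump_deriv -Rintegral_mkcondr.
rewrite /sin_bump patchE.
have [tp|pt] := leP t p.
  have -> : `[0, t] `&` `]p, p + L[ = set0.
    apply/seteqP; split => x //=; rewrite !in_itv /= => -[/andP[_ xt] /andP[px _]].
    by have := lt_le_trans px (le_trans xt tp); rewrite ltxx.
  rewrite Rintegral_set0; case: ifP => // /set_mem; rewrite /= in_itv /= => /andP[pt _].
  have -> : t = p by apply/eqP; rewrite eq_le tp pt.
  exact: sin_shift_p.
have [tpL|pLt] := ltP t (p + L).
  have -> : `[0, t] `&` `]p, p + L[ = [set` `]p, t]].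
    apply/seteqP; split => x /=; rewrite !in_itv /=.
      by move=> [/andP[_ xt] /andP[px _]]; rewrite px xt.
    move=> /andP[px xt]; rewrite xt px (le_lt_trans xt tpL) andbT.
    by rewrite (le_trans p0 (ltW px)).
  rewrite Rintegral_k_cos_shift // ifT //.
  by apply/mem_set; rewrite /= in_itv /= (ltW pt) ltW.
have -> : `[0, t] `&` `]p, p + L[ = [set` `]p, p + L[].
  apply/seteqP; split => x /=; rewrite !in_itv /=; first by case.
  move=> /andP[px xpL]; rewrite px xpL (le_trans p0 (ltW px)).
  by rewrite (le_trans (ltW xpL) pLt).
rewrite Rintegral_itv_oo_cc // -Rintegral_itv_obnd_cbnd ?Rintegral_k_cos_shift ?ltrDl//;
  last by apply: integrableS (integrable_continuous p (p + L) continuous_k_cos_shift) => //;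
          apply: subset_itv; rewrite bnd_simp.
rewrite sin_shift_pL; case: ifP => // /set_mem; rewrite /= in_itv /= => /andP[_ tpL].
have -> : t = p + L by apply/eqP; rewrite eq_le tpL pLt.
exact: sin_shift_pL.
Qed.

End sine_bump.

Section H1_interval.
Context {R : realType}.
Notation leb := (@lebesgue_measure R).
Implicit Types (T : R) (f df u g : R -> R).

Definition H1_0T T f df : Prop :=
  sq_integrable leb `[0, T] df /\
  forall t, 0 <= t <= T -> f t = f 0 + \int[leb]_(x in `[0, t]) df x.

Lemma H1ctrlE T (u g : ctrl R) : H1ctrl T u g <-> H1_0T T u.1 g.1 /\ H1_0T T u.2 g.2.
Proof. by split=> [[[L1 L2] [h1 h2]] | [[L1 h1] [L2 h2]]]. Qed.

Lemma sq_integrable_integrable T t f : t <= T -> sq_integrable leb `[0, T] f ->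
  leb.-integrable `[0, t] (EFin \o f).
Proof.
move=> tT Lf; have L1 : sq_integrable leb `[0, T] (fun=> 1 : R).
  by apply: (@sq_integrable_bounded _ _ _ 1) => // _; rewrite expr1n.
have If : leb.-integrable `[0, T] (EFin \o f).
  apply: (eq_integrable _ _ _ _ (integrable_mul _ Lf L1)) => //.
  by move=> x _; rewrite /= mulr1.
by apply: integrableS If => //; apply: subset_itv; rewrite bnd_simp.
Qed.

Lemma H1_0T_lin T s f df u g : H1_0T T f df -> H1_0T T u g ->
  H1_0T T (fun t => s * f t + u t) (fun t => s * df t + g t).
Proof.
move=> [Ldf hf] [Lg hu]; split; first exact: sq_integrable_lin.
move=> t /andP[t0 tT].
have Idf := sq_integrable_integrable tT Ldf; have Ig := sq_integrable_integrable tT Lg.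
rewrite RintegralD ?RintegralZl //; last exact: integrableZl_EFin.
by rewrite hf ?t0 ?tT // hu ?t0 ?tT //; ring.
Qed.

Lemma H1_0TZ T c f df : H1_0T T f df -> H1_0T T (fun t => c * f t) (fun t => c * df t).
Proof.
move=> [Ldf hf]; split; first exact: sq_integrableZ.
move=> t /andP[t0 tT].
by rewrite RintegralZl ?(sq_integrable_integrable tT Ldf) // hf ?t0 ?tT // mulrDr.
Qed.

Lemma H1_0T_continuous T f df : 0 <= T -> H1_0T T f df -> {within `[0, T], continuous f}.
Proof.
move=> T0 [Ldf hf].
have cF : {within `[0, T], continuous (fun t => f 0 + \int[leb]_(x in `[0, t]) df x)}.
  have cI := parameterized_integral_continuous T0 (sq_integrable_integrable (lexx T) Ldf).
  by move=> t; exact: (continuousD (@cst_continuous _ _ (f 0) t) (cI t)).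
apply: subspace_eq_continuous cF => t /set_mem; rewrite /= in_itv /= => /hf ft.
exact: esym ft.
Qed.

Lemma H1_0T_sq_integrable T f df : 0 <= T -> H1_0T T f df -> sq_integrable leb `[0, T] f.
Proof.
move=> T0 /(H1_0T_continuous T0) cf; apply: sq_integrableP => //.
  exact: subspace_continuous_measurable_fun.
apply: continuous_compact_integrable; first exact: segment_compact.
by move=> x; apply: continuousM; exact: cf.
Qed.

Lemma H1_0T_sin_bump T p L : 0 < L -> 0 <= p -> H1_0T T (sin_bump p L) (sin_bump_deriv p L).
Proof.
move=> L0 p0; split; first exact: sq_integrable_sin_bump_deriv.
by move=> t /andP[t0 _]; exact: sin_bump_FTC.
Qed.

End H1_interval.

Section nonvanishing_continuous.
Context {R : realType}.

Lemma within_continuousM (A : set R) (f g : R -> R) : {within A, continuous f} ->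
  {within A, continuous g} -> {within A, continuous (fun x => f x * g x)}.
Proof. by move=> cf cg x; apply: continuousM; [exact: cf | exact: cg]. Qed.

Variables (a b : R) (f : R -> R).
Hypotheses (ab : a <= b) (cf : {within `[a, b], continuous f})
  (f_neq0 : forall t, a <= t <= b -> f t != 0).

Lemma continuous_nonvanishing_sqr_ge :
  exists2 c, 0 < c & forall t, a <= t <= b -> c <= f t ^+ 2.
Proof.
have [c cab minc] := EVT_min ab (within_continuousM cf cf).
exists (f c ^+ 2); last by move=> t tab; rewrite expr2 (minc t) // in_itv.
by move: cab; rewrite in_itv lt_def sqrf_eq0 sqr_ge0 andbT => /f_neq0.
Qed.

Lemma continuous_nonvanishing_sign t : a <= t <= b -> 0 < f a * f t.
Proof.
move=> /andP[a_le_t tb]; rewrite ltNge; apply/negP => fat_le0.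
have cf' : {within `[a, t], continuous f}.
  by apply: continuous_subspaceW cf; apply: subset_itv; rewrite bnd_simp.
have fa_neq0 : f a != 0 by apply: f_neq0; rewrite lexx ab.
have [c cat fc0] : exists2 c, c \in `[a, t] & f c = 0.
  apply: IVT => //; rewrite ge_min le_max.
  have [fa_lt0|fa_ge0] := ltP (f a) 0.
    have ft_ge0 : 0 <= f t by nra.
    by rewrite (ltW fa_lt0) ft_ge0 orbT.
  have fa_gt0 : 0 < f a by rewrite lt_def fa_neq0.
  have ft_le0 : f t <= 0 by nra.
  by rewrite ft_le0 orbT.
move: cat; rewrite in_itv /= => /andP[ac ct].
by have := @f_neq0 c; rewrite ac (le_trans ct tb) fc0 eqxx => /(_ isT).
Qed.

End nonvanishing_continuous.

Lemma continuous_nonvanishing_product {R : realType} (a b : R) (f g : R -> R) : a <= b ->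
  {within `[a, b], continuous f} -> {within `[a, b], continuous g} ->
  (forall t, a <= t <= b -> f t * g t != 0) ->
  exists sg m, [/\ sg ^+ 2 = 1, 0 < m &
    forall t, a <= t <= b -> [/\ 0 < sg * (f t * g t), m <= f t ^+ 2 & m <= g t ^+ 2]].
Proof.
move=> ab cf cg fg_neq0.
have f_neq0 t : a <= t <= b -> f t != 0.
  by move/fg_neq0; apply: contra => /eqP ->; rewrite mul0r.
have g_neq0 t : a <= t <= b -> g t != 0.
  by move/fg_neq0; apply: contra => /eqP ->; rewrite mulr0.
have [mf mf_gt0 f_ge] := continuous_nonvanishing_sqr_ge ab cf f_neq0.
have [mg mg_gt0 g_ge] := continuous_nonvanishing_sqr_ge ab cg g_neq0.
have sign := continuous_nonvanishing_sign ab (within_continuousM cf cg) fg_neq0.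
have fga_neq0 : f a * g a != 0 by apply: fg_neq0; rewrite lexx ab.
exists (if 0 < f a * g a then 1 else -1), (Num.min mf mg); split.
- by case: ifP; rewrite ?sqrrN expr1n.
- by rewrite lt_min mf_gt0 mg_gt0.
move=> t tab; have fg_t := sign t tab; split.
- case: ifP => [fga_gt0|/negbT]; first by rewrite mul1r -(pmulr_rgt0 _ fga_gt0).
  rewrite -leNgt le_eqVlt (negbTE fga_neq0) /= mulN1r oppr_gt0 => fga_lt0.
  by rewrite -(nmulr_rgt0 _ fga_lt0).
- by rewrite ge_min f_ge.
- by rewrite ge_min g_ge ?orbT.
Qed.

Lemma H1ctrl_product_bounded_away {R : realType} (T a b L : R) (u g : ctrl R) :
  0 <= T -> H1ctrl T u g -> 0 < L -> L < b - a ->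
  (forall t, a < t < b -> 0 <= t <= T /\ u.1 t * u.2 t != 0) ->
  exists p sg m, [/\ 0 <= p, p + L <= T, sg ^+ 2 = 1, 0 < m &
    forall t, p <= t <= p + L ->
      [/\ 0 < sg * (u.1 t * u.2 t), m <= u.1 t ^+ 2 & m <= u.2 t ^+ 2]].
Proof.
move=> T0 /H1ctrlE[Hu1 Hu2] L_gt0 L_lt ab_nonzero.
pose p := a + (b - a - L) / 2.
have pL_nonzero t : p <= t <= p + L -> (0 <= t <= T) /\ u.1 t * u.2 t != 0.
  by move=> /andP[pt tpL]; apply: ab_nonzero; apply/andP; split; rewrite /p in pt tpL; lra.
have pLp : p <= p + L by rewrite lerDl ltW.
have /pL_nonzero[/andP[p_ge0 _] _] : p <= p <= p + L by rewrite lexx pLp.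
have /pL_nonzero[/andP[_ pL_leT] _] : p <= p + L <= p + L by rewrite lexx pLp.
have sub : `[p, p + L] `<=` `[0, T] by apply: subset_itv; rewrite bnd_simp.
have [sg [m [sg2 m_gt0 u_bounds]]] := continuous_nonvanishing_product pLp
  (continuous_subspaceW sub (H1_0T_continuous T0 Hu1))
  (continuous_subspaceW sub (H1_0T_continuous T0 Hu2))
  (fun t tI => (pL_nonzero t tI).2).
by exists p, sg, m.
Qed.

Section controls.
Context {R : realType}.
Notation leb := (@lebesgue_measure R).
Implicit Types (T s c sg : R) (f df : R -> R) (u g w dw : ctrl R).

Lemma L2_0TE T f : L2_0T T f = sq_integrable leb `[0, T] f.
Proof. by []. Qed.

Lemma sqnorm_0TE T f : sqnorm_0T T f = sqnorm leb `[0, T] f.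
Proof. by []. Qed.

Lemma L2ctrl_lin T s u w : L2ctrl T u -> L2ctrl T w -> L2ctrl T (ctrl_lin s w u).
Proof.
by rewrite /L2ctrl !L2_0TE => -[Lu1 Lu2] [Lw1 Lw2]; split; apply: sq_integrable_lin.
Qed.

Lemma sqnorm_ctrl_lin T s u w : L2ctrl T u -> L2ctrl T w ->
  sqnorm_ctrl T (ctrl_lin s w u) = sqnorm_ctrl T u
    + 2 * s * (\int[leb]_(x in `[0, T]) (u.1 x * w.1 x)
               + \int[leb]_(x in `[0, T]) (u.2 x * w.2 x))
    + s ^+ 2 * sqnorm_ctrl T w.
Proof.
rewrite /L2ctrl !L2_0TE => -[Lu1 Lu2] [Lw1 Lw2]; rewrite /sqnorm_ctrl !sqnorm_0TE /=.
by rewrite !sqnorm_lin //; ring.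
Qed.

Lemma sqnorm_ctrl_lin_self T c w : L2ctrl T w ->
  sqnorm_ctrl T (ctrl_lin c w w) = (c + 1) ^+ 2 * sqnorm_ctrl T w.
Proof.
rewrite /L2ctrl !L2_0TE => -[Lw1 Lw2]; rewrite /sqnorm_ctrl !sqnorm_0TE mulrDr -!sqnormZ //.
by congr (_ + _); apply: eq_Rintegral => x _; rewrite mulrDl mul1r.
Qed.

Lemma sqnorm_ctrl_sub_lin T s u w : L2ctrl T w ->
  sqnorm_ctrl T (ctrl_sub (ctrl_lin s w u) u) = s ^+ 2 * sqnorm_ctrl T w.
Proof.
rewrite /L2ctrl !L2_0TE => -[Lw1 Lw2]; rewrite /sqnorm_ctrl !sqnorm_0TE mulrDr -!sqnormZ //.
by congr (_ + _); apply: eq_Rintegral => x _; rewrite /= addrK.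
Qed.

Lemma H1ctrl_lin T s u g w dw : H1ctrl T u g -> H1ctrl T w dw ->
  H1ctrl T (ctrl_lin s w u) (ctrl_lin s dw g).
Proof.
move=> /H1ctrlE[Hu1 Hu2] /H1ctrlE[Hw1 Hw2].
by apply/H1ctrlE; split; apply: H1_0T_lin.
Qed.

Lemma sqdist_H1_lin T s u g w dw : L2ctrl T w -> L2ctrl T dw ->
  sqdist_H1 T (ctrl_lin s w u) (ctrl_lin s dw g) u g =
  s ^+ 2 * (sqnorm_ctrl T w + sqnorm_ctrl T dw).
Proof. by move=> Lw Ldw; rewrite /sqdist_H1 !sqnorm_ctrl_sub_lin // -mulrDr. Qed.

Definition ctrl_skew sg f : ctrl R := (f, fun t => - sg * f t).

Lemma L2ctrl_skew T sg f : sq_integrable leb `[0, T] f -> L2ctrl T (ctrl_skew sg f).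
Proof. by move=> Lf; rewrite /L2ctrl !L2_0TE; split => //; exact: sq_integrableZ. Qed.

Lemma sqnorm_ctrl_skew T sg f : sg ^+ 2 = 1 -> sq_integrable leb `[0, T] f ->
  sqnorm_ctrl T (ctrl_skew sg f) = 2 * sqnorm leb `[0, T] f.
Proof.
move=> sg2 Lf; rewrite /sqnorm_ctrl !sqnorm_0TE sqnormZ //.
by rewrite sqrrN sg2 mul1r mulr_natl mulr2n.
Qed.

Lemma H1ctrl_skew T sg f df : H1_0T T f df -> H1ctrl T (ctrl_skew sg f) (ctrl_skew sg df).
Proof. by move=> Hf; apply/H1ctrlE; split => //; exact: H1_0TZ. Qed.

End controls.

Section state_operator.
Context {R : realType} {d : measure_display} {X : measurableType d}
  (mu : {measure set X -> \bar R}) (T : R) (S0 : ctrl R -> X -> R).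
Hypotheses (S0_L2 : forall u, L2ctrl T u -> L2mu mu (S0 u))
  (S0_lin : forall u v a, L2ctrl T u -> L2ctrl T v ->
     {ae mu, forall x, S0 (ctrl_lin a u v) x = a * S0 u x + S0 v x}).
Implicit Types (u w : ctrl R) (f : X -> R).

Let mT : measurable (setT : set X) := measurableT.

Lemma sqnorm_muE f : sqnorm_mu mu f = sqnorm mu setT f.
Proof. by []. Qed.

Lemma sqnorm_mu_tracking_lin (s0 yd : X -> R) s u w :
  L2mu mu s0 -> L2mu mu yd -> L2ctrl T u -> L2ctrl T w ->
  sqnorm_mu mu (fun x => s0 x + S0 (ctrl_lin s w u) x - yd x) =
  sqnorm_mu mu (fun x => s0 x + S0 u x - yd x)
  + 2 * s * \int[mu]_x ((s0 x + S0 u x - yd x) * S0 w x)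
  + s ^+ 2 * sqnorm_mu mu (S0 w).
Proof.
move=> Ls0 Lyd Lu Lw.
have Ltrack v : L2ctrl T v -> sq_integrable mu setT (fun x => s0 x + S0 v x - yd x).
  move=> Lv; have := sq_integrable_lin mT (-1) (sq_integrable_lin mT 1 Ls0 (S0_L2 Lv)) Lyd.
  by congr sq_integrable; apply/funext => x; ring.
have LSw : sq_integrable mu setT (S0 w) := S0_L2 Lw.
have LA := Ltrack _ Lu.
rewrite !sqnorm_muE -sqnorm_lin //; apply: sqnorm_ae => //.
- exact: (Ltrack _ (L2ctrl_lin s Lu Lw)).1.
- exact: (sq_integrable_lin mT s LA LSw).1.
- by apply: filterS (S0_lin s Lw Lu) => x /= ->; ring.
Qed.

Variable C : R.
Hypothesis S0_bounded :
  forall u, L2ctrl T u -> sqnorm_mu mu (S0 u) <= C ^+ 2 * sqnorm_ctrl T u.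

Lemma sqnorm_mu_le_opnorm u : L2ctrl T u -> sqnorm_ctrl T u <= 1 ->
  sqnorm_mu mu (S0 u) <= opnorm mu T S0 ^+ 2.
Proof.
move=> Lu u_le1.
have ub : has_ubound [set y | exists v, L2ctrl T v /\ sqnorm_ctrl T v <= 1 /\
                               y = Num.sqrt (sqnorm_mu mu (S0 v))].
  exists `|C|; move=> y [v [Lv [v_le1 ->]]].
  rewrite -sqrtr_sqr ler_wsqrtr // (le_trans (S0_bounded Lv)) //.
  by rewrite ler_piMr ?sqr_ge0.
have le_opnorm : Num.sqrt (sqnorm_mu mu (S0 u)) <= opnorm mu T S0.
  by rewrite /opnorm; apply: (ub_le_sup ub); exists u.
have S0u_ge0 : 0 <= sqnorm_mu mu (S0 u) := sqnorm_ge0 _ _ _.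
rewrite -(sqr_sqrtr S0u_ge0).
have := sqrtr_ge0 (sqnorm_mu mu (S0 u)); nra.
Qed.

Lemma sqnorm_mu_le_opnorm_sqnorm w : L2ctrl T w -> 0 < sqnorm_ctrl T w ->
  sqnorm_mu mu (S0 w) <= opnorm mu T S0 ^+ 2 * sqnorm_ctrl T w.
Proof.
move=> Lw w_gt0; set n := sqnorm_ctrl T w.
(* [S0] is only known to be additive and homogeneous through [ctrl_lin], so the
   normalisation [w / sqrt n] is written as [ctrl_lin c w w]. *)
pose c := (Num.sqrt n)^-1 - 1.
have c1 : (c + 1) ^+ 2 * n = 1.
  by rewrite subrK exprVn sqr_sqrtr ?mulVf ?gt_eqF // ltW.
have Lz := L2ctrl_lin c Lw Lw.
have Sz : sqnorm_mu mu (S0 (ctrl_lin c w w)) = (c + 1) ^+ 2 * sqnorm_mu mu (S0 w).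
  rewrite !sqnorm_muE -sqnormZ //; last exact: S0_L2.
  apply: sqnorm_ae => //; first exact: (S0_L2 Lz).1.
    exact: (sq_integrableZ mT _ (S0_L2 Lw)).1.
  by apply: filterS (S0_lin c Lw Lw) => x ->; rewrite [RHS]mulrDl mul1r.
have := sqnorm_mu_le_opnorm Lz; rewrite sqnorm_ctrl_lin_self // c1 Sz => /(_ (lexx 1)).
by rewrite -(ler_pM2r w_gt0) mulrAC c1 mul1r.
Qed.

End state_operator.

Lemma normr_sgE {R : realType} (sg x : R) : sg ^+ 2 = 1 -> 0 < sg * x -> `|x| = sg * x.
Proof.
move=> sg2 sgx_gt0; have /eqP sg_norm1 : `|sg| == 1 by rewrite -sqr_norm_eq1 sg2.
by rewrite -(ger0_norm (ltW sgx_gt0)) normrM sg_norm1 mul1r.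
Qed.

(* While [(s f)^2 < m], neither factor changes sign, so the absolute value is
   resolved with the same sign [sg] before and after the perturbation. *)
Lemma normrM_perturb {R : realType} (s f u1 u2 sg m : R) : sg ^+ 2 = 1 ->
  f = 0 \/ [/\ 0 < sg * (u1 * u2), m <= u1 ^+ 2, m <= u2 ^+ 2 & (s * f) ^+ 2 < m] ->
  `|(s * f + u1) * (s * (- sg * f) + u2)| =
  `|u1 * u2| + s * (f * (sg * u2 - u1)) - s ^+ 2 * f ^+ 2.
Proof.
move=> sg2 [->|[sg_u12 m_u1 m_u2]].
  by rewrite !(mulr0, mul0r, add0r, addr0, subr0, expr0n, oppr0).
set e := s * f => e_m.
have sg_u2e : (- sg * e) ^+ 2 = e ^+ 2 by rewrite exprMn sqrrN sg2 mul1r.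
have u1e : 0 < (e + u1) * u1 by nra.
have u2e : 0 < (- sg * e + u2) * u2 by nra.
have sg_P : 0 < sg * ((e + u1) * (- sg * e + u2)).
  rewrite -(pmulr_rgt0 _ sg_u12).
  have -> : sg * (u1 * u2) * (sg * ((e + u1) * (- sg * e + u2))) =
            sg ^+ 2 * ((e + u1) * u1 * ((- sg * e + u2) * u2)) by ring.
  by rewrite sg2 mul1r mulr_gt0.
rewrite (_ : s * (- sg * f) = - sg * e); last by rewrite /e; ring.
rewrite (normr_sgE sg2 sg_P) (normr_sgE sg2 sg_u12).
have -> : sg * ((e + u1) * (- sg * e + u2)) =
  sg * (u1 * u2) + s * (f * (sg * u2 - u1)) - s ^+ 2 * f ^+ 2
  + (1 - sg ^+ 2) * (e ^+ 2 + e * u1) by rewrite /e; ring.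
by rewrite sg2 subrr mul0r addr0.
Qed.

Lemma near0_sqrM_lt {R : realType} (c r : R) :
  0 < r -> \forall s \near (0 : R), s ^+ 2 * c < r.
Proof.
move=> r0.
suff : (fun s : R => s ^+ 2 * c) @ 0 --> (0 : R) ^+ 2 * c.
  by rewrite expr2 !mul0r => /cvgr_lt; apply.
by apply: cvgM; [exact: exprn_continuous | exact: cvg_cst].
Qed.

Lemma local_min_quadratic_ge0 {R : realType} (J : R -> R) (J0 B Q : R) :
  (\forall s \near 0, J s = J0 + B * s + Q * s ^+ 2 /\ J0 <= J s) -> 0 <= Q.
Proof.
move=> /nbhs_norm0P [e /= e0 He].
have [|Jp Jp_ge] := He (e / 2); first by rewrite /= gtr0_norm; lra.
have [|Jm Jm_ge] := He (- (e / 2)); first by rewrite /= normrN gtr0_norm; lra.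
have e2 : 0 < (e / 2) ^+ 2 by rewrite exprn_gt0 // divr_gt0.
rewrite Jp in Jp_ge; rewrite Jm sqrrN in Jm_ge.
rewrite -(pmulr_lge0 _ e2); lra.
Qed.

Section bump_perturbation.
Context {R : realType} {d : measure_display} {X : measurableType d}
  (mu : {measure set X -> \bar R}) (T : R)
  (s0 : X -> R) (S0 : ctrl R -> X -> R) (yd : X -> R)
  (alpha eps beta : R) (ubar gbar : ctrl R).
Notation leb := (@lebesgue_measure R).
Hypotheses (T0 : 0 <= T) (Ls0 : L2mu mu s0) (Lyd : L2mu mu yd)
  (S0_L2 : forall u, L2ctrl T u -> L2mu mu (S0 u))
  (S0_lin : forall u v a, L2ctrl T u -> L2ctrl T v ->
     {ae mu, forall x, S0 (ctrl_lin a u v) x = a * S0 u x + S0 v x})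
  (H1ubar : H1ctrl T ubar gbar).
Variables (p L sg m : R).
Hypotheses (L0 : 0 < L) (p0 : 0 <= p) (pLT : p + L <= T) (sg2 : sg ^+ 2 = 1)
  (ubar_bounds : forall t, p <= t <= p + L ->
     [/\ 0 < sg * (ubar.1 t * ubar.2 t), m <= ubar.1 t ^+ 2 & m <= ubar.2 t ^+ 2]).

Let w := ctrl_skew sg (sin_bump p L).
Let dw := ctrl_skew sg (sin_bump_deriv p L).
Let Q := 2^-1 * sqnorm_mu mu (S0 w) + alpha / 2 * sqnorm_ctrl T w
  + eps / 2 * sqnorm_ctrl T dw - beta * sqnorm leb `[0, T] (sin_bump p L).

Let H1w : H1ctrl T w dw.
Proof. exact/H1ctrl_skew/H1_0T_sin_bump. Qed.

Let Lw : L2ctrl T w.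
Proof. exact/L2ctrl_skew/sq_integrable_sin_bump. Qed.

Let Ldw : L2ctrl T dw.
Proof. exact/L2ctrl_skew/sq_integrable_sin_bump_deriv. Qed.

Let Lubar : sq_integrable leb `[0, T] ubar.1 /\ sq_integrable leb `[0, T] ubar.2.
Proof.
have [Hu1 Hu2] := (H1ctrlE T ubar gbar).1 H1ubar.
by split; [exact: H1_0T_sq_integrable T0 Hu1 | exact: H1_0T_sq_integrable T0 Hu2].
Qed.

Lemma H1ctrl_bump_perturb s : H1ctrl T (ctrl_lin s w ubar) (ctrl_lin s dw gbar).
Proof. exact: H1ctrl_lin. Qed.

Lemma sqdist_bump_perturb s :
  sqdist_H1 T (ctrl_lin s w ubar) (ctrl_lin s dw gbar) ubar gbar =
  s ^+ 2 * (sqnorm_ctrl T w + sqnorm_ctrl T dw).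
Proof. exact: sqdist_H1_lin. Qed.

Lemma abs_product_bump_perturb s : s ^+ 2 < m ->
  fine (\int[leb]_(t in Icc 0 T)
          (`|(ctrl_lin s w ubar).1 t * (ctrl_lin s w ubar).2 t|)%:E) =
  \int[leb]_(t in `[0, T]) `|ubar.1 t * ubar.2 t|
  + s * \int[leb]_(t in `[0, T]) (sin_bump p L t * (sg * ubar.2 t - ubar.1 t))
  - s ^+ 2 * sqnorm leb `[0, T] (sin_bump p L).
Proof.
move=> s_m; have [Lu1 Lu2] := Lubar; have Lphi := sq_integrable_sin_bump p L T.
have Lell : sq_integrable leb `[0, T] (fun t => sg * ubar.2 t - ubar.1 t).
  have -> : (fun t => sg * ubar.2 t - ubar.1 t) = (fun t => sg * ubar.2 t + -1 * ubar.1 t).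
    by apply/funext => t; rewrite mulN1r.
  by apply: sq_integrable_lin => //; exact: sq_integrableZ.
have I1 : leb.-integrable `[0, T] (EFin \o (fun t => `|ubar.1 t * ubar.2 t|)).
  by apply: integrable_normM.
have I2 : leb.-integrable `[0, T]
    (EFin \o (fun t => sin_bump p L t * (sg * ubar.2 t - ubar.1 t))).
  exact: integrable_mul.
have I3 : leb.-integrable `[0, T] (EFin \o (fun t => sin_bump p L t ^+ 2)).
  exact: integrable_sqr.
rewrite /sqnorm -!RintegralZl -?RintegralD -?RintegralB //; first last.
- exact: integrableZl_EFin.
- exact: integrableZl_EFin.
- by apply: integrableD_EFin => //; exact: integrableZl_EFin.
apply: eq_Rintegral => t _; apply: (normrM_perturb (m := m) sg2).
have [tI|tI] := boolP (t \in `[p, p + L]).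
  move: tI; rewrite in_itv => /ubar_bounds[sg_u12 m_u1 m_u2].
  right; split => //; apply: le_lt_trans s_m.
  by rewrite exprMn ler_piMr ?sqr_ge0 // sin_bump_sqr_le1.
by left; rewrite /w /= /sin_bump patchE ifF //; apply/negbTE; apply: contra tI => /set_mem.
Qed.

Lemma Jbeta_bump_perturb : exists B, forall s, s ^+ 2 < m ->
  Jbeta mu T s0 S0 yd alpha eps beta (ctrl_lin s w ubar) (ctrl_lin s dw gbar) =
  Jbeta mu T s0 S0 yd alpha eps beta ubar gbar + B * s + Q * s ^+ 2.
Proof.
have Lu : L2ctrl T ubar := Lubar.
have [[Lg1 _] [Lg2 _]] := (H1ctrlE T ubar gbar).1 H1ubar.
have Lg : L2ctrl T gbar by [].
exists (\int[mu]_x ((s0 x + S0 ubar x - yd x) * S0 w x)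
  + alpha * (\int[leb]_(t in `[0, T]) (ubar.1 t * w.1 t)
             + \int[leb]_(t in `[0, T]) (ubar.2 t * w.2 t))
  + eps * (\int[leb]_(t in `[0, T]) (gbar.1 t * dw.1 t)
           + \int[leb]_(t in `[0, T]) (gbar.2 t * dw.2 t))
  + beta * \int[leb]_(t in `[0, T]) (sin_bump p L t * (sg * ubar.2 t - ubar.1 t))).
move=> s s_m; rewrite /Jbeta (sqnorm_mu_tracking_lin S0_L2 S0_lin) // !sqnorm_ctrl_lin //.
rewrite abs_product_bump_perturb //.
rewrite -/(Rintegral leb `[0, T] (fun t => `|ubar.1 t * ubar.2 t|)).
by rewrite /Q; field.
Qed.

Lemma bump_second_order_lt0 (C : R) :
  (forall u, L2ctrl T u -> sqnorm_mu mu (S0 u) <= C ^+ 2 * sqnorm_ctrl T u) ->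
  L ^+ 2 = eps -> opnorm mu T S0 ^+ 2 + alpha + pi ^+ 2 < beta -> Q < 0.
Proof.
move=> S0_bounded eps_L beta_gt; rewrite /Q -eps_L.
have sub : `[p, p + L] `<=` `[0, T] by apply: subset_itv; rewrite bnd_simp.
have nphi := sqnorm_sin_bump L0 sub.
have nw : sqnorm_ctrl T w = L.
  by rewrite sqnorm_ctrl_skew ?nphi //; [field | exact: sq_integrable_sin_bump].
have ndw : sqnorm_ctrl T dw = pi ^+ 2 / L.
  rewrite sqnorm_ctrl_skew ?sqnorm_sin_bump_deriv //.
    by field; rewrite gt_eqF.
  exact: sq_integrable_sin_bump_deriv.
have Sw := sqnorm_mu_le_opnorm_sqnorm S0_L2 S0_lin S0_bounded Lw.
rewrite nw in Sw; have {Sw}Sw := Sw L0.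
have -> : L ^+ 2 / 2 * sqnorm_ctrl T dw = pi ^+ 2 * L / 2.
  by rewrite ndw; field; rewrite gt_eqF.
have : 0 < L * (beta - (opnorm mu T S0 ^+ 2 + alpha + pi ^+ 2)).
  by rewrite mulr_gt0 // subr_gt0.
rewrite nw nphi; lra.
Qed.

Lemma bump_second_order_ge0 (delta : R) : 0 < delta -> 0 < m ->
  (forall v h, H1ctrl T v h -> sqdist_H1 T v h ubar gbar < delta ^+ 2 ->
     Jbeta mu T s0 S0 yd alpha eps beta ubar gbar
       <= Jbeta mu T s0 S0 yd alpha eps beta v h) ->
  0 <= Q.
Proof.
move=> delta_gt0 m_gt0 ubar_min; have [B JB] := Jbeta_bump_perturb.
pose J s := Jbeta mu T s0 S0 yd alpha eps beta (ctrl_lin s w ubar) (ctrl_lin s dw gbar).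
apply: (local_min_quadratic_ge0 (J := J) (B := B)); near=> s; split.
- apply: JB; near: s.
  by apply: filterS (near0_sqrM_lt 1 m_gt0) => s; rewrite mulr1.
- apply: ubar_min; first exact: H1ctrl_bump_perturb.
  by rewrite sqdist_bump_perturb; near: s; apply: near0_sqrM_lt; rewrite exprn_gt0.
Unshelve. all: by end_near.
Qed.

End bump_perturbation.

Theorem theorem3p2 (R : realType) (d : measure_display) (X : measurableType d)
  (mu : {measure set X -> \bar R}) (T : R)
  (s0 : X -> R) (S0 : ctrl R -> X -> R) (yd : X -> R)
  (alpha eps beta : R) (ubar gbar : ctrl R) :
  0 < T ->
  (* S = s0 + S0 : L^2(0,T;R^2) -> L^2(mu) continuous affine, S0 its linear part *)
  L2mu mu s0 ->
  (forall u, L2ctrl T u -> L2mu mu (S0 u)) ->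
  (forall u v a, L2ctrl T u -> L2ctrl T v ->
     {ae mu, forall x, S0 (ctrl_lin a u v) x = a * S0 u x + S0 v x}) ->
  (exists C : R, forall u, L2ctrl T u ->
     sqnorm_mu mu (S0 u) <= C ^+ 2 * sqnorm_ctrl T u) ->
  L2mu mu yd ->
  0 < alpha -> 0 < eps ->
  (opnorm mu T S0) ^+ 2 + alpha + pi ^+ 2 < beta ->
  (* ubar in H^1(0,T;R^2) with ubar_t = gbar is a local minimizer of J_beta *)
  H1ctrl T ubar gbar ->
  (exists delta : R, 0 < delta /\
     forall v h, H1ctrl T v h -> sqdist_H1 T v h ubar gbar < delta ^+ 2 ->
       Jbeta mu T s0 S0 yd alpha eps beta ubar gbar
         <= Jbeta mu T s0 S0 yd alpha eps beta v h) ->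
  (* every interval contained in {t in [0,T] | ubar1 t * ubar2 t <> 0}
     has length at most sqrt eps *)
  forall a b : R,
    (forall t, a < t < b -> 0 <= t <= T /\ ubar.1 t * ubar.2 t != 0) ->
    b - a <= Num.sqrt eps.
Proof.
move=> T_gt0 Ls0 S0_L2 S0_lin [C S0_bounded] Lyd _ eps_gt0 beta_gt H1ubar
  [delta [delta_gt0 ubar_min]] a b ab_nonzero.
rewrite leNgt; apply/negP => L_lt.
have L_gt0 : 0 < Num.sqrt eps by rewrite sqrtr_gt0.
have [p [sg [m [p_ge0 pL_leT sg2 m_gt0 ubar_bounds]]]] :=
  H1ctrl_product_bounded_away (ltW T_gt0) H1ubar L_gt0 L_lt ab_nonzero.
have := bump_second_order_ge0 (ltW T_gt0) Ls0 Lyd S0_L2 S0_lin H1ubar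
  L_gt0 p_ge0 sg2 ubar_bounds delta_gt0 m_gt0 ubar_min.
by rewrite leNgt (bump_second_order_lt0 S0_L2 S0_lin L_gt0 p_ge0 pL_leT sg2 S0_bounded
  (sqr_sqrtr (ltW eps_gt0)) beta_gt).
Qed.
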